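(* Let $E$ be a normed space, $\tau$ a linear topology on $E$ weaker than the norm topology, and $F$ a subspace of $E$. The following are equivalent: (i) $0_E$ is $\tau$-separated from $\mathrm{S}_F$; (ii) $\tau$ coincides with the norm topology on $F$; (iii) $\rho_F$ is $\tau$-complementary on $E$.
   Context: $\mathrm{S}_F$ is the unit sphere of $F$; $0_E$ is $\tau$-separated from $A$ if some $\tau$-neighborhood of $0_E$ is disjoint from $A$. $\rho_F(e)=\inf_{f\in F}\|e-f\|$ is the distance from $e$ to $F$. A continuous semi-norm $\rho$ on $E$ is $\tau$-complementary if there is no net in the unit sphere $\mathrm{S}_E$ which is null both in $\tau$ and in $\rho$. *)

From HB Require Import structures.
From mathcomp Require Import all_boot all_order all_algebra.
From mathcomp Require Import all_classical all_reals all_analysis.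
Set Implicit Arguments. Unset Strict Implicit. Unset Printing Implicit Defensive.
Import Order.TTheory GRing.Theory Num.Theory.
Import numFieldNormedType.Exports.
Local Open Scope classical_set_scope.
Local Open Scope ring_scope.

Section Defs.
Context {R : realType} {E : normedModType R}.

Definition is_topology (tau : set (set E)) : Prop :=
  [/\ tau setT, tau set0,
      (forall S : set (set E), S `<=` tau -> tau (\bigcup_(A in S) A)) &
      (forall U V, tau U -> tau V -> tau (U `&` V))].

(* [tau] is a linear topology: a topology for which addition
   E x E -> E and scalar multiplication R x E -> E are jointly continuous
   (R with its usual topology, products with the product topology). *)
Definition is_linear_topology (tau : set (set E)) : Prop :=
  [/\ is_topology tau,
      (forall U x y, tau U -> U (x + y) ->
         exists V W, [/\ tau V, V x, tau W, W y &
           forall v w, V v -> W w -> U (v + w)]) &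
      (forall U (a : R) x, tau U -> U (a *: x) ->
         exists (d : R) V, [/\ 0 < d, tau V, V x &
           forall b v, `|b - a| < d -> V v -> U (b *: v)])].

Definition weaker_than_norm (tau : set (set E)) : Prop :=
  forall U, tau U -> open U.

Definition is_subspace (F : set E) : Prop :=
  [/\ F 0, (forall x y, F x -> F y -> F (x + y)) &
      (forall (a : R) x, F x -> F (a *: x))].

Definition unit_sphere (F : set E) : set E := [set x | F x /\ `|x| = 1].

Definition tau_nbhs (tau : set (set E)) (x : E) (N : set E) : Prop :=
  exists U, [/\ tau U, U x & U `<=` N].
Definition zero_tau_separated (tau : set (set E)) (A : set E) : Prop :=
  exists N, tau_nbhs tau 0 N /\ N `&` A = set0.

Definition coincide_on (tau : set (set E)) (F : set E) : Prop :=
  forall A, A `<=` F ->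
    ((exists U, tau U /\ A = U `&` F) <-> (exists U, open U /\ A = U `&` F)).

Definition dist_to (F : set E) (e : E) : R := inf [set `|e - f| | f in F].

Definition continuous_seminorm (rho : E -> R) : Prop :=
  [/\ (forall x, 0 <= rho x),
      (forall x y, rho (x + y) <= rho x + rho y),
      (forall (a : R) x, rho (a *: x) = `|a| * rho x) &
      continuous rho].

Definition directed (D : Type) (le : D -> D -> Prop) : Prop :=
  [/\ exists d : D, True,
      (forall d, le d d),
      (forall a b c, le a b -> le b c -> le a c) &
      (forall a b, exists c, le a c /\ le b c)].

Definition net_tau_null (tau : set (set E)) (D : Type) (le : D -> D -> Prop)
  (x : D -> E) : Prop :=
  forall U, tau U -> U 0 -> exists d0, forall d, le d0 d -> U (x d).

Definition net_rho_null (rho : E -> R) (D : Type) (le : D -> D -> Prop)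
  (x : D -> E) : Prop :=
  forall eps : R, 0 < eps -> exists d0, forall d, le d0 d -> `|rho (x d)| < eps.

Definition tau_complementary (tau : set (set E)) (rho : E -> R) : Prop :=
  continuous_seminorm rho /\
  ~ (exists (D : Type) (le : D -> D -> Prop) (x : D -> E),
       [/\ directed le, (forall d, unit_sphere setT (x d)),
           net_tau_null tau le x & net_rho_null rho le x]).

End Defs.

From HB Require Import structures.
From mathcomp Require Import all_boot all_order all_algebra.
From mathcomp Require Import all_classical all_reals all_analysis.
From mathcomp Require Import lra ring.
Import Order.TTheory GRing.Theory Num.Theory.
Import numFieldNormedType.Exports.
Local Open Scope classical_set_scope.
Local Open Scope ring_scope.

(* Next, in a linear
   topology a tau-neighbourhood of 0 avoiding S_F contains, by continuity of
   scalar multiplication at (0, 0), a tau-neighbourhood of 0 whose F-vectors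
   are norm-bounded; rescaling it yields tau-neighbourhoods of 0 whose
   F-vectors are norm-small.  With this "shrinking" lemma:
   (i) -> (ii): every norm ball of F around y contains a translate by y of
   such a small tau-neighbourhood; (ii) -> (i): the unit ball of F is
   tau-open in F; (i) -> (iii): a net on S_E that is tau-null and rho_F-null
   is eventually close to points of F of norm 1/2 lying in a small
   tau-neighbourhood, which is absurd; (iii) -> (i): if every
   tau-neighbourhood U of 0 meets S_F, choosing a point of U /\ S_F gives a
   net indexed by the neighbourhoods of 0 that is tau-null and rho_F-null. *)

Lemma open_ball_around {R : realType} {E : normedModType R} (U : set E) x :
  open U -> U x -> exists2 r : R, 0 < r & forall y, `|x - y| < r -> U y.
Proof.
move=> oU Ux; have /nbhs_ballP [r r0 rU] : nbhs x U by apply: open_nbhs_nbhs.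
by exists r => // y xy; apply: rU; rewrite -ball_normE.
Qed.

Section DistanceToSubspace.
Context {R : realType} {E : normedModType R} (F : set E).
Hypothesis F0 : F 0.
Hypothesis FD : forall x y, F x -> F y -> F (x + y).
Hypothesis FZ : forall (a : R) x, F x -> F (a *: x).

Let dists_neq0 x : [set `|x - f| | f in F] !=set0.
Proof. by exists `|x - 0|, 0. Qed.

Let dists_lbound x : has_lbound [set `|x - f| | f in F].
Proof. by exists 0 => _ [f _ <-]. Qed.

Lemma dist_le x {f} : F f -> dist_to F x <= `|x - f|.
Proof. by move=> Ff; apply: (ge_inf (dists_lbound x)); exists f. Qed.

Lemma dist_ge x c : (forall f, F f -> c <= `|x - f|) -> c <= dist_to F x.
Proof. by move=> h; apply: lb_le_inf => // _ [f Ff <-]; apply: h. Qed.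

Lemma dist_ge0 x : 0 <= dist_to F x.
Proof. by apply: dist_ge. Qed.

Lemma dist_lt x c : dist_to F x < c -> exists2 f, F f & `|x - f| < c.
Proof. by move=> /(inf_lt (dists_neq0 x)) [_ [f Ff <-] xfc]; exists f. Qed.

Lemma dist_in x : F x -> dist_to F x = 0.
Proof.
move=> Fx; apply/eqP; rewrite eq_le dist_ge0 andbT.
by have := dist_le x Fx; rewrite subrr normr0.
Qed.

Lemma dist_add x y : dist_to F (x + y) <= dist_to F x + dist_to F y.
Proof.
rewrite -lerBlDl; apply: dist_ge => g Fg; rewrite lerBlDl -lerBlDr.
apply: dist_ge => f Ff; rewrite lerBlDr.
apply: le_trans (dist_le (x + y) (FD _ _ Ff Fg)) _.
by rewrite opprD addrACA ler_normD.
Qed.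

Lemma dist_scale (a : R) x : dist_to F (a *: x) = `|a| * dist_to F x.
Proof.
have [->|a0] := eqVneq a 0; first by rewrite scale0r normr0 mul0r dist_in.
have na0 : 0 < `|a| by rewrite normr_gt0.
apply/eqP; rewrite eq_le; apply/andP; split.
  rewrite -ler_pdivrMl //; apply: dist_ge => g Fg.
  by rewrite ler_pdivrMl // -normrZ scalerBr; apply/dist_le/FZ.
apply: dist_ge => f Ff.
have -> : a *: x - f = a *: (x - a^-1 *: f).
  by rewrite scalerBr scalerA divff // scale1r.
by rewrite normrZ ler_pM2l //; apply/dist_le/FZ.
Qed.

Lemma dist_lipschitz x y : dist_to F x <= dist_to F y + `|x - y|.
Proof.
have := dist_add y (x - y); rewrite [y + _]addrC subrK => /le_trans; apply.
rewrite lerD2l.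
by have := dist_le (x - y) F0; rewrite subr0.
Qed.

Lemma dist_continuous : continuous (dist_to F).
Proof.
move=> x; apply/cvgrPdist_lt => e e0; near=> y.
have xy : `|x - y| < e by near: y; exact: (cvgrPdist_lt _ _).1 cvg_id _ e0.
have := dist_lipschitz x y; have := dist_lipschitz y x; rewrite distrC.
by move=> *; rewrite ltr_norml; apply/andP; split; lra.
Unshelve. all: by end_near. Qed.

Lemma dist_seminorm : continuous_seminorm (dist_to F).
Proof. by split; [exact: dist_ge0 | exact: dist_add | exact: dist_scale |
  exact: dist_continuous]. Qed.

End DistanceToSubspace.

Section LinearTopology.
Context {R : realType} {E : normedModType R} (tau : set (set E)).
Hypothesis tau_linear : is_linear_topology tau.

Lemma tau_open_local (P : set E) :
  (forall v, P v -> exists V, [/\ tau V, V v & V `<=` P]) -> tau P.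
Proof.
move=> locP; case: tau_linear => -[_ _ tau_bigcup _] _ _.
have -> : P = \bigcup_(A in [set A | tau A /\ A `<=` P]) A.
  apply/seteqP; split=> [v Pv|v [A [_ AP] /AP] //].
  by have [V [tV Vv VP]] := locP v Pv; exists V.
by apply: tau_bigcup => A [].
Qed.

Lemma tau_translate U c : tau U -> tau [set v | U (v + c)].
Proof.
move=> tU; apply: tau_open_local => v /= Uvc; case: tau_linear => _ tau_add _.
have [V [W [tV Vv _ Wc VWU]]] := tau_add U v c tU Uvc.
by exists V; split => // w Vw; apply: VWU.
Qed.

Lemma tau_dilate U (a : R) : tau U -> tau [set v | U (a *: v)].
Proof.
move=> tU; apply: tau_open_local => v /= Uav; case: tau_linear => _ _ tau_scale.
have [d [V [d0 tV Vv dVU]]] := tau_scale U a v tU Uav.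
by exists V; split => // w Vw; apply: dVU; rewrite ?subrr ?normr0.
Qed.

Variable F : set E.
Hypothesis FZ : forall (a : R) x, F x -> F (a *: x).

Definition sphere_free (U : set E) : Prop :=
  [/\ tau U, U 0 & forall x, U x -> F x -> `|x| <> 1].

Lemma separated_sphere_free :
  zero_tau_separated tau (unit_sphere F) -> exists U, sphere_free U.
Proof.
move=> [N [[U [tU U0 UN]] NS]]; exists U; split => // x Ux Fx x1.
have : (N `&` unit_sphere F) x by split; [exact: UN | split].
by rewrite NS.
Qed.

(* If U avoids S_F, continuity of (b, v) |-> b v at (0, 0) gives d > 0 and
   a tau-neighbourhood V of 0 with b v in U for |b| < d, v in V; then
   F-vectors of V have norm <= 1/d, else |v|^-1 v would lie in U /\ S_F. *)
Lemma sphere_free_bounded U : sphere_free U ->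
  exists2 M : R, 0 < M & exists V, [/\ tau V, V 0 &
    forall v, V v -> F v -> `|v| <= M].
Proof.
move=> [tU U0 U_S]; case: tau_linear => _ _ tau_scale.
have [|d [V [d0 tV V0 dVU]]] := tau_scale U 0 0 tU; first by rewrite scale0r.
exists d^-1; rewrite ?invr_gt0 //; exists V; split => // v Vv Fv.
rewrite leNgt; apply/negP => vlong.
have v0 : 0 < `|v| by apply: lt_trans vlong; rewrite invr_gt0.
apply: (U_S (`|v|^-1 *: v)); last by rewrite normrZ normfV normr_id mulVf ?gt_eqF.
- by apply: dVU => //; rewrite subr0 normfV normr_id -ltf_pV2 ?posrE ?invr_gt0
    ?invrK.
- exact: FZ.
Qed.

Lemma sphere_free_small U : sphere_free U ->
  forall eps : R, 0 < eps -> exists W, [/\ tau W, W 0 &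
     forall w, W w -> F w -> `|w| < eps].
Proof.
move=> /sphere_free_bounded [M M0 [V [tV V0 V_M]]] eps eps0.
pose c := 2 * M / eps; have c0 : 0 < c by rewrite divr_gt0 ?mulr_gt0.
exists [set w | V (c *: w)]; split; first exact: tau_dilate.
  by rewrite /= scaler0.
move=> w /= Vcw Fw; have := V_M _ Vcw (FZ c _ Fw).
rewrite normrZ gtr0_norm // -ler_pdivlMl // => wle.
have cM : c^-1 * M = eps / 2 by rewrite /c; field; rewrite ?gt_eqF.
by rewrite cM in wle; lra.
Qed.

Definition zero_nbhd := {U : set E | tau U /\ U 0}.

Definition zero_nbhd_le (U V : zero_nbhd) : Prop := sval V `<=` sval U.

Lemma zero_nbhd_directed : directed zero_nbhd_le.
Proof.
case: tau_linear => -[tauT _ _ tauI] _ _.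
split=> [||a b c ab bc z /bc /ab //|].
- by exists (exist _ setT (conj tauT I)).
- by move=> ? ?.
- move=> [a [ta a0]] [b [tb b0]].
  have ab : tau (a `&` b) /\ (a `&` b) 0 by split; [exact: tauI | split].
  by exists (exist _ (a `&` b) ab); split => z [].
Qed.

End LinearTopology.

Section Equivalences.
Context {R : realType} {E : normedModType R} (tau : set (set E)) (F : set E).
Hypothesis tau_linear : is_linear_topology tau.
Hypothesis tau_weak : weaker_than_norm tau.
Hypothesis F0 : F 0.
Hypothesis FD : forall x y, F x -> F y -> F (x + y).
Hypothesis FZ : forall (a : R) x, F x -> F (a *: x).

(* (i) -> (ii): a norm-open trace V /\ F is the trace of the union of all
   tau-open sets whose trace lies in V; y + W works around each y in V /\ F. *)
Lemma separated_coincide :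
  zero_tau_separated tau (unit_sphere F) -> coincide_on tau F.
Proof.
move=> /separated_sphere_free [U Ufree] A _; split.
  by move=> [V [tV ->]]; exists V; split => //; apply: tau_weak.
move=> [V [oV ->]]; case: tau_linear => -[_ _ tau_bigcup _] _ _.
exists (\bigcup_(B in [set B | tau B /\ B `&` F `<=` V]) B).
split; first by apply: tau_bigcup => B [].
apply/seteqP; split=> [y [Vy Fy]|y [[B [_ BV] By] Fy]]; last first.
  by split => //; apply: BV.
split => //; have [r r0 r_V] := open_ball_around _ _ oV Vy.
have [W [tW W0 W_small]] := sphere_free_small _ tau_linear _ FZ _ Ufree _ r0.
exists [set z | W (z - y)]; last by rewrite /= subrr.
split; first exact: tau_translate _ tau_linear _ _ tW.
move=> z [/= Wzy Fz]; apply: r_V; rewrite distrC; apply: W_small => //.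
by apply: FD => //; rewrite -scaleN1r; apply: FZ.
Qed.

(* (ii) -> (i): the open unit ball of F is the trace of a tau-open set. *)
Lemma coincide_separated :
  coincide_on tau F -> zero_tau_separated tau (unit_sphere F).
Proof.
move=> agree.
have [U [tU ballU]] : exists U, tau U /\ ball (0 : E) 1 `&` F = U `&` F.
  apply/(agree (ball 0 1 `&` F)); first by move=> x [].
  by exists (ball 0 1); split => //; exact: ball_open.
have [U0 _] : (U `&` F) 0 by rewrite -ballU; split => //; exact: ballxx.
exists U; split; first by exists U; split.
apply/seteqP; split => // x [Ux [Fx x1]].
have [] : (ball (0 : E) 1 `&` F) x by rewrite ballU.
by rewrite -ball_normE /= sub0r normrN x1 ltxx.
Qed.

(* (i) -> (iii): for a unit-norm net x, tau-null and rho_F-null, write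
   x d = f + (x d - f) with f in F and |x d - f| small; eventually f lies in
   a tau-neighbourhood where F-vectors have norm < 1/2, yet |f| > 1/2. *)
Lemma separated_complementary :
  zero_tau_separated tau (unit_sphere F) -> tau_complementary tau (dist_to F).
Proof.
move=> /separated_sphere_free [U Ufree]; split; first exact: dist_seminorm.
move=> [D [le [x [[_ _ _ le_dir] x_unit x_tau x_rho]]]].
have half_gt0 : (0 : R) < 1 / 2 by [].
have [W [tW W0 W_small]] := sphere_free_small _ tau_linear _ FZ _ Ufree _ half_gt0.
have W00 : W (0 + 0) by rewrite addr0.
case: tau_linear => _ tau_add _.
have [V1 [V2 [tV1 V10 tV2 V20 V12W]]] := tau_add W 0 0 tW W00.
have [r r0 r_V2] := open_ball_around _ _ (tau_weak _ tV2) V20.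
pose del := Num.min r (1 / 2).
have del0 : 0 < del by rewrite lt_min r0.
have [d1 d1_V1] := x_tau V1 tV1 V10.
have [d2 d2_del] := x_rho del del0.
have [d [d1d d2d]] := le_dir d1 d2.
have [f Ff xf] : exists2 f, F f & `|x d - f| < del.
  by apply: dist_lt => //; have := d2_del d d2d; rewrite ger0_norm // dist_ge0.
have Wf : W f.
  rewrite -[f](subrK (x d)) addrC; apply: V12W; first exact: d1_V1.
  by apply: r_V2; rewrite sub0r normrN distrC (lt_le_trans xf) // ge_min lexx.
have f_small := W_small f Wf Ff.
have [_ xd1] := x_unit d.
have := ler_normD f (x d - f); rewrite addrC subrK xd1.
have : del <= 1 / 2 by rewrite ge_min lexx orbT.
lra.
Qed.

(* (iii) -> (i): if every tau-neighbourhood U of 0 meets S_F, a choice of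
   points of U /\ S_F is a unit-norm net, tau-null and vanishing under rho_F. *)
Lemma complementary_separated :
  tau_complementary tau (dist_to F) -> zero_tau_separated tau (unit_sphere F).
Proof.
move=> [_ no_net]; apply: contrapT => not_sep; apply: no_net.
have pick (U : zero_nbhd tau) : exists y, [/\ sval U y, F y & `|y| = 1].
  case: U => U [tU U0] /=; apply: contrapT => U_S; apply: not_sep.
  exists U; split; first by exists U; split.
  by apply/seteqP; split => // y [Uy [Fy y1]]; apply: U_S; exists y.
have [tauT] : tau setT /\ (setT : set E) 0 by case: tau_linear => -[].
move=> T0; pose top : zero_nbhd tau := exist _ setT (conj tauT T0).
exists (zero_nbhd tau), (@zero_nbhd_le _ _ tau), (fun U => sval (cid (pick U))).
split.
- exact: zero_nbhd_directed.
- by move=> U; have [_ _ y1] := svalP (cid (pick U)).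
- move=> V tV V0; exists (exist _ V (conj tV V0)) => U /= UV.
  by have [Uy _ _] := svalP (cid (pick U)); apply: UV.
- move=> eps eps0; exists top => U _.
  by have [_ Fy _] := svalP (cid (pick U)); rewrite dist_in // normr0.
Qed.

End Equivalences.

Theorem proposition2p6 (R : realType) (E : normedModType R)
  (tau : set (set E)) (F : set E) :
  is_linear_topology tau -> weaker_than_norm tau -> is_subspace F ->
  [<-> zero_tau_separated tau (unit_sphere F);
       coincide_on tau F;
       tau_complementary tau (dist_to F)].
Proof.
move=> tau_linear tau_weak [F0 FD FZ].
split; first exact: separated_coincide.
split; last exact: complementary_separated.
by move/(coincide_separated _ _ F0); apply: separated_complementary.
Qed.
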